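(* Let $\ell\ge 2$, $A\ge 2$, $H\ge \ell+1$ be integers and let $\pi$ be an $\ell$-step model predictive control (MPC) agent whose values $\{V_h(s)\}$ are computed by a procedure satisfying the following assumption: for every $h\in[H]$ there is a function $f_h:\mathcal{D}\to\mathbb{R}_+$, where $\mathcal{D}$ is the set of Borel distributions on $[0,1]^A$, such that whenever $s$ is a semi-terminal state at step $h$ with joint reward distribution $\mathcal{R}_h(s)\in\mathcal{D}$ over its actions, $V_h(s)=f_h(\mathcal{R}_h(s))$. Then there exists an episodic tabular MDP with $A$ actions, horizon $H$, at most $S\le A^{\ell}+\ell+1$ states and deterministic transitions, and an initial state $s_1$, for which $\frac{V^{\pi}_1(s_1)}{V^*_1(s_1)}\le A^{1-\ell/2}$, where $V^*_1(s_1)$ is the optimal value among $\ell$-step lookahead policies. Moreover, in the constructed environments there exists an MPC agent (for some choice of values) whose value equals $V^*_1(s_1)$.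
   Context: Episodic tabular MDP: finite state space $\mathcal{S}$, $A$ actions, horizon $H$, rewards in $[0,1]$ with distributions $\mathcal{R}_h(s,a)$, transitions $P_h$, independent across steps (arbitrarily correlated across state-actions within a step). $\ell$-step lookahead information $I_{h,\ell_h}(s)$ at step $h$ in state $s$ ($\ell_h=\min\{\ell,H-h+1\}$) consists of the realized rewards and next states along all trajectories from $s$ over steps $h,\dots,h+\ell_h-1$ under every deterministic Markov policy; for a deterministic Markov policy $\phi$, $\mathfrak{R}_{t\mid h}(s,\phi,I)$ and $\mathfrak{s}_{t\mid h}(s,\phi,I)$ denote the reward at step $t$ and the state at step $t$ obtained from $s_h=s$ following $\phi$ under the realization $I$. An $\ell$-step lookahead policy chooses actions using the current state and the lookahead observed at each step. An $\ell$-step MPC agent is specified by values $V_h(s)$ for all $h,s$; at each step $h$ in state $s$, upon observing $I=I_{h,\ell_h}(s)$, it computes $\phi\in\arg\max_{\phi}\{\sum_{t=h}^{h+\ell_h-1}\mathfrak{R}_{t\mid h}(s,\phi,I)+V_{h+\ell_h}(\mathfrak{s}_{h+\ell_h\mid h}(s,\phi,I))\}$ over deterministic Markov policies, plays only $\phi_h(s)$, and repeats at the next step with the updated lookahead. A state $s_T$ is terminal if for all $h,a$ it transitions to itself with probability one and yields zero reward; a state $s$ is semi-terminal at step $h$ if every action leads from $s$ to a terminal state with probability one (rewards at $s$ may be random). *)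

From mathcomp Require Import all_boot all_order all_algebra.
From mathcomp Require Import reals exp.
Set Implicit Arguments. Unset Strict Implicit. Unset Printing Implicit Defensive.
Import Order.TTheory GRing.Theory Num.Theory.
Local Open Scope ring_scope.

(* Steps are 0-based: h = 0, ..., H-1 (paper's step h+1).  The randomness of step h is a single outcome w drawn from
   a finite distribution prob h on 'I_(nK.+1); it determines the rewards
   rew h w s a and the next states nxt h w s a of ALL state-action pairs
   (so arbitrary correlation within a step); outcomes of different steps
   are independent. *)
Section MDP.
Variables (R : realType) (A H : nat).

Record mdp (n : nat) := MDP {
  nK : nat;
  prob : nat -> 'I_nK.+1 -> R;
  rew : nat -> 'I_nK.+1 -> 'I_n -> 'I_A -> R;
  nxt : nat -> 'I_nK.+1 -> 'I_n -> 'I_A -> 'I_n;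
  prob_ge0 : forall h w, (h < H)%N -> 0 <= prob h w;
  prob_sum1 : forall h, (h < H)%N -> \sum_w prob h w = 1;
  rew_range : forall h w s a, (h < H)%N -> 0 <= rew h w s a <= 1 }.

Arguments nK {n} m.
Arguments prob {n} m _ _.
Arguments rew {n} m _ _ _ _.
Arguments nxt {n} m _ _ _ _.

Variable n : nat.
Implicit Types (M : mdp n).

Definition outc M := 'I_(nK M).+1.

Definition lh (ell h : nat) : nat := minn ell (H - h).

Fixpoint stt M (h : nat) (s : 'I_n) (phi : nat -> 'I_n -> 'I_A)
    (ws : nat -> outc M) (k : nat) : 'I_n :=
  match k with
  | 0 => s
  | k'.+1 => let x := stt h s phi ws k' in
             nxt M (h + k') (ws (h + k')) x (phi (h + k') x)
  end.

Definition rwd M h s phi (ws : nat -> outc M) k : R :=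
  let x := stt h s phi ws k in rew M (h + k) (ws (h + k)) x (phi (h + k) x).

(* ws and ws' give the same ell-step lookahead information I_{h,ell_h}(s) *)
Definition info_eq M ell h s (ws ws' : nat -> outc M) : Prop :=
  forall (phi : nat -> 'I_n -> 'I_A) k, (k < lh ell h)%N ->
    rwd h s phi ws k = rwd h s phi ws' k /\
    stt h s phi ws k.+1 = stt h s phi ws' k.+1.

Definition is_lookahead M ell (pi : nat -> 'I_n -> (nat -> outc M) -> 'I_A) :=
  forall h s ws ws', info_eq ell h s ws ws' -> pi h s ws = pi h s ws'.

Fixpoint traj M (pi : nat -> 'I_n -> (nat -> outc M) -> 'I_A) (s1 : 'I_n)
    (ws : nat -> outc M) (k : nat) : 'I_n :=
  match k with
  | 0 => s1
  | k'.+1 => let x := traj pi s1 ws k' in nxt M k' (ws k') x (pi k' x ws)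
  end.

Definition ret M pi s1 (ws : nat -> outc M) : R :=
  \sum_(k < H) rew M k (ws k) (traj pi s1 ws k) (pi k (traj pi s1 ws k) ws).

Definition ws_of M (wf : {ffun 'I_H -> outc M}) : nat -> outc M :=
  fun t => odflt ord0 (omap wf (insub t : option 'I_H)).

Definition value M (pi : nat -> 'I_n -> (nat -> outc M) -> 'I_A) s1 : R :=
  \sum_(wf : {ffun 'I_H -> outc M})
     (\prod_(i < H) prob M i (wf i)) * ret pi s1 (ws_of wf).

Definition Vterm (V : nat -> 'I_n -> R) (t : nat) (x : 'I_n) : R :=
  if (t < H)%N then V t x else 0.

Definition mpc_obj M ell (V : nat -> 'I_n -> R) h s phi (ws : nat -> outc M) : R :=
  \sum_(k < lh ell h) rwd h s phi ws k
  + Vterm V (h + lh ell h) (stt h s phi ws (lh ell h)).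

(* pi is an ell-step MPC agent with values V (any tie-breaking, as long as
   it is a lookahead policy) *)
Definition is_mpc M ell (V : nat -> 'I_n -> R) pi :=
  is_lookahead ell pi /\
  forall h s (ws : nat -> outc M), (h < H)%N ->
    exists phi : nat -> 'I_n -> 'I_A,
      (forall phi', mpc_obj ell V h s phi' ws <= mpc_obj ell V h s phi ws) /\
      phi h s = pi h s ws.

Definition terminal M (x : 'I_n) :=
  forall h w a, (h < H)%N -> 0 < prob M h w ->
    nxt M h w x a = x /\ rew M h w x a = 0.

Definition semi_terminal M h (s : 'I_n) :=
  forall w a, 0 < prob M h w -> terminal M (nxt M h w s a).

(* joint reward distribution R_h(s) on [0,1]^A, as a probability mass function *)
Definition rlaw M h (s : 'I_n) : 'rV[R]_A -> R :=
  fun v => \sum_(w | (\row_a rew M h w s a) == v) prob M h w.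

Definition det_trans M :=
  forall h w w' s a, (h < H)%N -> 0 < prob M h w -> 0 < prob M h w' ->
    nxt M h w s a = nxt M h w' s a.

End MDP.

Arguments is_lookahead {R A H n} M ell pi.
Arguments is_mpc {R A H n} M ell V pi.
Arguments value {R A H n} M pi s1.

From mathcomp Require Import all_boot all_order all_algebra all_fingroup.
From mathcomp Require Import reals exp boolp.
From mathcomp Require Import ring zify.
Set Implicit Arguments. Unset Strict Implicit. Unset Printing Implicit Defensive.
Import Order.TTheory GRing.Theory Num.Theory.
Local Open Scope ring_scope.

(* Steps are counted from 0.  From the start state, action 0 enters a layer of
   [width = A^(ell-1)] nodes; any other action collects [1/width] and enters a
   detour that rejoins the layer at node 0 at step [ell].  Inside the layer,
   action [a] moves node [x] to [x A + a mod width], so [ell - 1] moves reach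
   every node, and at step [ell] only a uniformly random node pays 1.  From
   step 1 on the lookahead reveals that node, so the best lookahead policy
   enters the layer and collects 1.  At step 0 it is still hidden; the layer
   nodes are semi-terminal at step [ell] with identical reward laws, so an MPC
   agent whose values depend only on those laws values them all alike and
   takes the detour, collecting [2/width <= A^(1-ell/2)].  An MPC agent whose
   values single out the nonzero nodes is optimal. *)

Section Trajectories.
Variables (R : realType) (A H n : nat) (M : mdp R A H n).
Implicit Types (phi : nat -> 'I_n -> 'I_A) (ws : nat -> outc M).

Lemma sttS h s phi ws k : stt h s phi ws k.+1 =
  nxt (m := M) (h + k) (ws (h + k)%N) (stt h s phi ws k) (phi (h + k)%N (stt h s phi ws k)).
Proof. by []. Qed.

Lemma sttSr h s phi ws k : stt h s phi ws k.+1 = stt h.+1 (stt h s phi ws 1) phi ws k.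
Proof. by elim: k => [|k IH] //; rewrite [LHS]sttS IH [RHS]sttS addSnnS. Qed.

Lemma stt_ext h s phi phi' ws ws' k :
  (forall j, (j < k)%N -> phi (h + j)%N = phi' (h + j)%N /\ ws (h + j)%N = ws' (h + j)%N) ->
  stt h s phi ws k = stt h s phi' ws' k.
Proof.
elim: k => [//|k IH] Hj; rewrite !sttS IH => [|j jk]; last exact/Hj/ltnW.
by case: (Hj k (ltnSn k)) => -> ->.
Qed.

Lemma stt_policy_ext h s phi phi' ws k :
  (forall j, (j < k)%N -> phi (h + j)%N = phi' (h + j)%N) ->
  stt h s phi ws k = stt h s phi' ws k.
Proof. by move=> Hj; apply: stt_ext => j /Hj. Qed.

Lemma traj_stt pi s ws k : traj pi s ws k = stt 0 s (fun t x => pi t x ws) ws k.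
Proof. by elim: k => //= k ->; rewrite add0n. Qed.

End Trajectories.

Section MpcAgent.
Variables (R : realType) (A H n : nat) (M : mdp R A H n) (ell : nat) (a0 : 'I_A).
Implicit Types (phi : nat -> 'I_n -> 'I_A) (ws : nat -> outc M) (V : nat -> 'I_n -> R).

Lemma mpc_obj_info V h s ws ws' phi :
  info_eq ell h s ws ws' -> mpc_obj ell V h s phi ws = mpc_obj ell V h s phi ws'.
Proof.
move=> Hi; rewrite /mpc_obj; congr (_ + _).
  by apply: eq_bigr => k _; case: (Hi phi k (ltn_ord k)).
case E: (lh H ell h) => [//|m].
by case: (Hi phi m); rewrite ?E // => _ ->.
Qed.

Lemma mpc_obj_local V h s ws phi phi' :
  (forall j, (j < lh H ell h)%N -> phi (h + j)%N = phi' (h + j)%N) ->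
  mpc_obj ell V h s phi ws = mpc_obj ell V h s phi' ws.
Proof.
move=> Hj; have Hstt k : (k <= lh H ell h)%N -> stt h s phi ws k = stt h s phi' ws k.
  by move=> kL; apply: stt_policy_ext => j jk; apply/Hj/(leq_trans jk).
rewrite /mpc_obj Hstt //; congr (_ + _); apply: eq_bigr => k _.
by rewrite /rwd Hstt 1?ltnW // Hj.
Qed.

Definition plan h := {ffun 'I_(lh H ell h) -> {ffun 'I_n -> 'I_A}}.

Definition plan_policy h (g : plan h) : nat -> 'I_n -> 'I_A :=
  fun t x => if (h <= t)%N then (if insub (t - h)%N is Some i then g i x else a0) else a0.

Definition policy_plan h phi : plan h :=
  [ffun i : 'I_(lh H ell h) => [ffun x : 'I_n => phi (h + i)%N x]].

Lemma mpc_obj_plan V h s ws phi :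
  mpc_obj ell V h s (plan_policy (policy_plan h phi)) ws = mpc_obj ell V h s phi ws.
Proof.
apply: mpc_obj_local => j jL; apply: funext => x; rewrite /plan_policy leq_addr addKn.
by case: insubP => [i _ vi|]; [rewrite !ffunE vi | rewrite jL].
Qed.

(* Maximising over the finitely many plans gives a maximiser, and [arg max]
   selects it as a function of the objective alone, hence of the lookahead. *)
Definition mpc_plan V h s ws :=
  [arg max_(g > policy_plan h (fun _ _ => a0)) mpc_obj ell V h s (plan_policy g) ws]%O.

Definition mpc_agent V h s ws : 'I_A := plan_policy (mpc_plan V h s ws) h s.

Lemma mpc_plan_max V h s ws phi :
  mpc_obj ell V h s phi ws <= mpc_obj ell V h s (plan_policy (mpc_plan V h s ws)) ws.
Proof. by rewrite -mpc_obj_plan /mpc_plan; case: arg_maxP => // g _; apply. Qed.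

Lemma is_mpc_agent V : is_mpc M ell V (mpc_agent V).
Proof.
split=> [h s ws ws' Hi | h s ws _]; last first.
  by exists (plan_policy (mpc_plan V h s ws)); split => //; apply: mpc_plan_max.
rewrite /mpc_agent /mpc_plan.
have -> // : (fun g : plan h => mpc_obj ell V h s (plan_policy g) ws) =
             (fun g : plan h => mpc_obj ell V h s (plan_policy g) ws').
by apply: funext => g; apply: mpc_obj_info.
Qed.

End MpcAgent.

Section HardInstance.
Variables (R : realType) (A H ell : nat).
Hypotheses (ell_ge2 : (2 <= ell)%N) (A_ge2 : (2 <= A)%N) (ell_lt_H : (ell < H)%N).

Definition width := (A ^ ell.-1)%N.

Lemma width_gt1 : (1 < width)%N.
Proof.
have : (A ^ 1 <= A ^ ell.-1)%N by rewrite leq_exp2l; lia.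
by rewrite /width expn1; lia.
Qed.

Lemma width_gt0 : (0 < width)%N. Proof. exact: ltnW width_gt1. Qed.

Definition start := width.
Definition detour := width.+1.
Definition sink := width.+2.
Definition nstates := width.+3.

Definition next_state (h x a : nat) : nat :=
  if h == 0%N then (if x == start then (if a == 0%N then 0%N else detour) else sink)
  else if (h < ell)%N then
    (if (x < width)%N then ((x * A + a) %% width)%N
     else if x == detour then (if h == ell.-1 then 0%N else detour) else sink)
  else sink.

Lemma next_state_lt h x a : (next_state h x a < nstates)%N.
Proof.
have := ltn_pmod (x * A + a) width_gt0.
rewrite /next_state /nstates /start /detour /sink; do ! case: ifP => _; lia.
Qed.

Lemma next_state_start a : next_state 0 start a = if a == 0%N then 0%N else detour.
Proof. by rewrite /next_state !eqxx. Qed.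

Lemma next_state_node h x a : (0 < h < ell)%N -> (x < width)%N ->
  next_state h x a = ((x * A + a) %% width)%N.
Proof. by move=> /andP[h0 hl] xN; rewrite /next_state hl xN; case: ifP => //; lia. Qed.

Lemma next_state_detour h a : (0 < h < ell)%N ->
  next_state h detour a = if h == ell.-1 then 0%N else detour.
Proof.
move=> /andP[h0 hl]; rewrite /next_state hl /detour eqxx ifF; last lia.
by rewrite ifF //; lia.
Qed.

Lemma next_state_late h x a : (ell <= h)%N -> next_state h x a = sink.
Proof. by move=> hl; rewrite /next_state ifF ?ifF //; lia. Qed.

Lemma next_state_sink h a : next_state h sink a = sink.
Proof. by rewrite /next_state /sink /start /detour; do ! case: ifP => //; lia. Qed.

Definition state := 'I_nstates.
Definition outcome := 'I_width.-1.+1.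

Lemma outcome_card : width.-1.+1 = width. Proof. exact: prednK width_gt0. Qed.

Definition eps : R := width%:R^-1.

Definition prob_at (h : nat) (w : outcome) : R := if h == ell then eps else (w == ord0)%:R.

Definition reward (h : nat) (w : outcome) (x : state) (a : 'I_A) : R :=
  if (h == 0%N) && (val x == start) && (val a != 0%N) then eps
  else if (h == ell) && (val x < width)%N && (val w == val x) then 1 else 0.

Definition next (h : nat) (w : outcome) (x : state) (a : 'I_A) : state :=
  inord (next_state h x a).

Lemma width_gt0R : (0 : R) < width%:R. Proof. by rewrite ltr0n width_gt0. Qed.
Lemma eps_gt0 : 0 < eps. Proof. by rewrite invr_gt0 width_gt0R. Qed.
Lemma eps_lt1 : eps < 1. Proof. by rewrite invf_lt1 ?width_gt0R // ltr1n width_gt1. Qed.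

Lemma sum_eps : \sum_(w : outcome) eps = 1.
Proof. by rewrite sumr_const card_ord outcome_card -mulr_natr mulVf ?gt_eqF ?width_gt0R. Qed.

Lemma sum_point : \sum_(w : outcome) (w == ord0)%:R = 1 :> R.
Proof. by rewrite (bigD1 ord0) //= big1 ?addr0 // => w /negPf ->. Qed.

Lemma prob_at_ge0 h w : (h < H)%N -> 0 <= prob_at h w.
Proof. by move=> _; rewrite /prob_at; case: ifP => _; [exact/ltW/eps_gt0 | exact: ler0n]. Qed.

Lemma prob_at_sum1 h : (h < H)%N -> \sum_w prob_at h w = 1.
Proof. by move=> _; rewrite /prob_at; case: (h == ell); rewrite ?sum_eps ?sum_point. Qed.

Lemma reward_range h w x a : (h < H)%N -> 0 <= reward h w x a <= 1.
Proof.
move=> _; rewrite /reward; case: ifP => _; first by rewrite (ltW eps_gt0) (ltW eps_lt1).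
by case: ifP; rewrite ?ler01 ?lexx.
Qed.

Definition hard_mdp : mdp R A H nstates :=
  @MDP R A H nstates width.-1 prob_at reward next prob_at_ge0 prob_at_sum1 reward_range.

Definition s1 : state := inord start.
Definition node0 : state := inord 0.
Definition sink_state : state := inord sink.

Lemma val_s1 : val s1 = start. Proof. by rewrite /= inordK // /start; lia. Qed.
Lemma val_node0 : val node0 = 0%N. Proof. by rewrite /= inordK. Qed.
Lemma val_sink_state : val sink_state = sink. Proof. by rewrite /= inordK. Qed.

Lemma val_next h w x a : val (next h w x a) = next_state h (val x) (val a).
Proof. exact/inordK/next_state_lt. Qed.

Lemma reward_mid h w x a : h != 0%N -> h != ell -> reward h w x a = 0.
Proof. by move=> h0 hl; rewrite /reward (negPf h0) (negPf hl). Qed.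

Implicit Types (phi : nat -> state -> 'I_A) (ws : nat -> outc hard_mdp) (x y : state).

Lemma stt_layer phi ws k : val (phi 0%N s1) = 0%N -> (0 < k <= ell)%N ->
  (val (stt 0 s1 phi ws k) < width)%N.
Proof.
move=> p0; elim: k => [//|[|k] IH] /andP[_ kl]; rewrite sttS val_next add0n.
  by rewrite val_s1 next_state_start p0 width_gt0.
by rewrite next_state_node ?ltn_pmod ?width_gt0 ?IH //; apply/andP; split; lia.
Qed.

Lemma stt_detour phi ws k : val (phi 0%N s1) != 0%N -> (0 < k < ell)%N ->
  val (stt 0 s1 phi ws k) = detour.
Proof.
move=> p0; elim: k => [//|[|k] IH] /andP[_ kl]; rewrite sttS val_next add0n.
  by rewrite val_s1 next_state_start (negPf p0).
rewrite IH ?next_state_detour; try by apply/andP; split; lia.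
by rewrite ifF //; lia.
Qed.

Lemma stt_detour_end phi ws : val (phi 0%N s1) != 0%N -> val (stt 0 s1 phi ws ell) = 0%N.
Proof.
move=> p0; have -> : ell = ell.-2.+2 by lia.
rewrite sttS val_next add0n stt_detour //; last by apply/andP; split; lia.
rewrite next_state_detour ?ifT //; lia.
Qed.

Lemma stt_layer_stays h x phi ws k : (0 < h)%N -> (val x < width)%N -> (h + k <= ell)%N ->
  (val (stt h x phi ws k) < width)%N.
Proof.
move=> h0 xN; elim: k => [//|k IH] hk; rewrite sttS val_next.
rewrite next_state_node ?ltn_pmod ?width_gt0 //; first by apply/andP; split; lia.
by apply: IH; lia.
Qed.

Lemma A_gt0 : (0 < A)%N. Proof. lia. Qed.
Definition a0 : 'I_A := Ordinal A_gt0.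

(* Choosing the digits of [j] in base [A] spells [j] out in the layer. *)
Lemma stt_layer_reach ws m j : (m <= ell.-1)%N -> (j < A ^ m)%N ->
  exists phi, val (stt 1 node0 phi ws m) = j.
Proof.
elim: m j => [|m IH] j hm hj.
  by exists (fun _ _ => a0); rewrite /= val_node0; move: hj; rewrite expn0; lia.
have jq : (j %/ A < A ^ m)%N by rewrite ltn_divLR ?A_gt0 // -expnSr.
have [phi Hphi] := IH (j %/ A)%N (ltnW hm) jq.
have jA : (j %% A < A)%N by rewrite ltn_mod A_gt0.
exists (fun t => if t == m.+1 then fun _ => Ordinal jA else phi t).
rewrite sttS val_next add1n eqxx (@stt_policy_ext _ _ _ _ hard_mdp _ _ _ phi); last first.
  by move=> i im; rewrite ifF //; lia.
have AmW : (A ^ m.+1 <= width)%N by rewrite leq_pexp2l ?A_gt0.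
have hm1 : (0 < m.+1 < ell)%N by apply/andP; split; lia.
rewrite Hphi next_state_node //= -?divn_eq ?modn_small //; first exact: leq_trans hj AmW.
exact: leq_trans jq (leq_trans (leq_pexp2l A_gt0 (leqnSn m)) AmW).
Qed.

Lemma stt_start_reach ws j : (j < width)%N ->
  exists phi, val (phi 0%N s1) = 0%N /\ val (stt 0 s1 phi ws ell) = j.
Proof.
move=> jW; have [phi Hphi] := stt_layer_reach ws (leqnn ell.-1) jW.
exists (fun t => if t == 0%N then fun _ => a0 else phi t); split => //.
have -> : ell = ell.-1.+1 by lia.
rewrite sttSr (_ : stt _ _ _ _ 1 = node0); last first.
  by apply: val_inj; rewrite sttS val_next val_s1 val_node0 next_state_start.
by rewrite -Hphi; congr val; apply: stt_policy_ext.
Qed.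

Lemma H_gt0 : (0 < H)%N. Proof. lia. Qed.

Lemma lh_start : lh H ell 0 = ell.
Proof. by rewrite /lh subn0; apply/minn_idPl/ltnW. Qed.

Lemma reward_start_layer w a : val a = 0%N -> reward 0 w s1 a = 0.
Proof. by move=> aE; rewrite /reward aE andbF ifF //; lia. Qed.

Lemma reward_start_detour w a : val a != 0%N -> reward 0 w s1 a = eps.
Proof. by move=> aE; rewrite /reward val_s1 !eqxx aE. Qed.

Lemma reward_end w x a : (val x < width)%N -> reward ell w x a = (val w == val x)%:R.
Proof. by move=> xN; rewrite /reward ifF ?eqxx ?xN /=; [case: eqP | lia]. Qed.

Lemma mpc_obj_start V phi ws : mpc_obj ell V 0 s1 phi ws =
  (if val (phi 0%N s1) != 0%N then eps else 0) + V ell (stt 0 s1 phi ws ell).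
Proof.
rewrite /mpc_obj lh_start; congr (_ + _); last by rewrite /Vterm add0n ell_lt_H.
have -> : ell = ell.-1.+1 by lia.
rewrite big_ord_recl big1 ?addr0 => [|i _]; last first.
  by rewrite /rwd /= reward_mid // add0n /bump /=; have := ltn_ord i; lia.
rewrite /rwd /= !natrDE; case: eqP => [|/eqP]; last exact: reward_start_detour.
exact: reward_start_layer.
Qed.

Lemma terminal_sink : terminal hard_mdp sink_state.
Proof.
move=> h w a _ _; split; first by apply: val_inj; rewrite val_next val_sink_state next_state_sink.
by rewrite /= /reward val_sink_state /sink /start !ifF //; lia.
Qed.

Lemma semi_terminal_layer x : (val x < width)%N -> semi_terminal hard_mdp ell x.
Proof.
move=> xN w a _; rewrite (_ : nxt _ _ _ _ = sink_state); first exact: terminal_sink.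
by apply: val_inj; rewrite val_next val_sink_state next_state_late.
Qed.

Definition layer_outcome x : outcome := inord (val x).

Lemma rlaw_layer x : (val x < width)%N ->
  rlaw hard_mdp ell x = fun r => \sum_(w | \row_(a < A) (w == layer_outcome x)%:R == r) eps.
Proof.
move=> xN; apply: funext => r; apply: eq_big => [w|w _]; last by rewrite /= /prob_at eqxx.
congr (_ == r); apply/matrixP => i a; rewrite !mxE /= reward_end //.
by rewrite -val_eqE /= inordK // outcome_card.
Qed.

(* Relabel the outcomes by the transposition exchanging the winning outcomes
   of [x] and [y]. *)
Lemma rlaw_layer_eq x y : (val x < width)%N -> (val y < width)%N ->
  rlaw hard_mdp ell x = rlaw hard_mdp ell y.
Proof.
move=> xN yN; rewrite !rlaw_layer //; apply: funext => r.
rewrite (reindex_inj (@perm_inj _ (tperm (layer_outcome x) (layer_outcome y)))) /=.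
by apply: eq_bigl => w; rewrite (canF_eq (tpermK _ _)) tpermL.
Qed.

Lemma mpc_detours V pi : is_mpc hard_mdp ell V pi ->
  (forall x y, (val x < width)%N -> (val y < width)%N -> V ell x = V ell y) ->
  forall ws, val (pi 0%N s1 ws) != 0%N.
Proof.
move=> [_ Hmax] HV ws; have [phi [Hphi <-]] := Hmax 0%N s1 ws H_gt0.
apply/negP => /eqP p0; pose a1 : 'I_A := Ordinal A_ge2.
pose phi' t := if t == 0%N then fun _ : state => a1 else phi t.
have p1 : val (phi' 0%N s1) != 0%N by [].
have := Hphi phi'; rewrite !mpc_obj_start p0 p1 /= add0r.
rewrite (HV (stt 0 s1 phi' ws ell) (stt 0 s1 phi ws ell)); last first.
- by apply: stt_layer => //; apply/andP; split; lia.
- by rewrite stt_detour_end // width_gt0.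
by rewrite gerDr leNgt eps_gt0.
Qed.

Definition ws_at (j : outcome) : nat -> outc hard_mdp :=
  fun t => if t == ell then j else ord0.

Definition ell_ord : 'I_H := Ordinal ell_lt_H.

Definition ffun_at (j : outcome) : {ffun 'I_H -> outc hard_mdp} :=
  [ffun i : 'I_H => ws_at j i].

Lemma ffun_at_ell j : ffun_at j ell_ord = j.
Proof. by rewrite ffunE /ws_at eqxx. Qed.

Lemma ws_of_ffun_at j : ws_of (ffun_at j) = ws_at j.
Proof.
apply: funext => t; rewrite /ws_of; case: insubP => [i _ <-|nt] /=; first by rewrite ffunE.
by rewrite /ws_at ifF //; apply: contraNF nt => /eqP ->.
Qed.

Lemma prob_ffun (wf : {ffun 'I_H -> outc hard_mdp}) :
  \prod_(i < H) prob_at i (wf i) = if wf == ffun_at (wf ell_ord) then eps else 0.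
Proof.
case: eqP => [wfE | ne].
  rewrite (bigD1 ell_ord) //= /prob_at eqxx big1 ?mulr1 // => i ni.
  have vi : (val i == ell) = false by apply: contraNF ni => /eqP vi; apply/eqP/val_inj.
  by rewrite vi wfE ffunE /ws_at vi.
have : ~~ [forall i, wf i == ffun_at (wf ell_ord) i].
  by apply: contra_notN ne => /forallP e; apply/ffunP => i; apply/eqP/e.
rewrite negb_forall => /existsP [i hi].
have vi : (val i == ell) = false.
  by apply: contraNF hi => /eqP vi; rewrite (_ : i = ell_ord) ?ffun_at_ell //; exact: val_inj.
rewrite (bigD1 i) //= /prob_at vi; move: hi; rewrite ffunE /ws_at vi => /negPf ->.
by rewrite mul0r.
Qed.

Lemma value_uniform pi :
  value hard_mdp pi s1 = eps * \sum_(j : outcome) ret pi s1 (ws_at j).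
Proof.
rewrite /value (eq_bigr (fun wf : {ffun 'I_H -> outc hard_mdp} =>
  if wf == ffun_at (wf ell_ord) then eps * ret pi s1 (ws_of wf) else 0)); last first.
  by move=> wf _; rewrite prob_ffun; case: ifP; rewrite ?mul0r.
rewrite (partition_big (fun wf : {ffun 'I_H -> outc hard_mdp} => wf ell_ord) xpredT) //=.
rewrite mulr_sumr; apply: eq_bigr => j _.
rewrite (bigD1 (ffun_at j)) /= ?ffun_at_ell // eqxx ws_of_ffun_at big1 ?addr0 //.
by move=> wf /andP[/eqP <- /negPf ->].
Qed.

Lemma ret_split pi ws : ret pi s1 ws = reward 0 (ws 0%N) s1 (pi 0%N s1 ws) +
  reward ell (ws ell) (traj pi s1 ws ell) (pi ell (traj pi s1 ws ell) ws).
Proof.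
rewrite /ret (bigD1 (Ordinal H_gt0)) //= (bigD1 ell_ord) /=; last first.
  by apply/eqP => /(congr1 val) /=; lia.
rewrite [X in _ + (_ + X)]big1 ?addr0 // => i /andP[n0 nE]; apply: reward_mid.
  by apply: contraNneq n0 => e; apply/eqP/val_inj.
by apply: contraNneq nE => e; apply/eqP/val_inj.
Qed.

Lemma ret_detour pi ws : val (pi 0%N s1 ws) != 0%N -> ret pi s1 ws = eps + (ws ell == ord0)%:R.
Proof.
move=> p0; rewrite ret_split reward_start_detour // reward_end traj_stt stt_detour_end //.
by rewrite width_gt0.
Qed.

Lemma ret_layer_le1 pi ws : val (pi 0%N s1 ws) = 0%N -> ret pi s1 ws <= 1.
Proof.
move=> p0; rewrite ret_split reward_start_layer // add0r; set t := traj pi s1 ws ell.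
by case/andP: (reward_range (ws ell) t (pi ell t ws) ell_lt_H).
Qed.

Lemma lookahead_start pi j :
  is_lookahead hard_mdp ell pi -> pi 0%N s1 (ws_at j) = pi 0%N s1 (ws_at ord0).
Proof.
move=> Hl; apply: Hl => phi k; rewrite lh_start => kl.
have ws_early t : (t < ell)%N -> ws_at j t = ws_at ord0 t by move=> tl; rewrite /ws_at ltn_eqF.
have Hstt k' : (k' <= ell)%N -> stt 0 s1 phi (ws_at j) k' = stt 0 s1 phi (ws_at ord0) k'.
  by move=> kl'; apply: stt_ext => i ik; split => //; apply: ws_early; lia.
by split; [rewrite /rwd Hstt 1?ltnW // natrDE add0n ws_early | apply: Hstt].
Qed.

Lemma value_detour pi :
  (forall j, val (pi 0%N s1 (ws_at j)) != 0%N) -> value hard_mdp pi s1 = eps + eps.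
Proof.
move=> det; rewrite value_uniform (eq_bigr (fun j => eps + (j == ord0)%:R)) => [|j _].
  by rewrite big_split /= sum_eps sum_point mulrDr mulr1.
by rewrite ret_detour // /ws_at eqxx.
Qed.

Lemma two_eps : eps + eps = 2 / width%:R.
Proof. by rewrite [RHS]mulr_natl mulr2n. Qed.

Lemma two_eps_le1 : eps + eps <= 1.
Proof. by rewrite two_eps ler_pdivrMr ?width_gt0R // mul1r (ler_nat R 2 width) width_gt1. Qed.

Lemma value_lookahead_le1 pi : is_lookahead hard_mdp ell pi -> value hard_mdp pi s1 <= 1.
Proof.
move=> Hl; case: (eqVneq (val (pi 0%N s1 (ws_at ord0))) 0%N) => [layer|det].
  rewrite value_uniform -sum_eps mulr_sumr; apply: ler_sum => j _.
  by rewrite ler_piMr ?(ltW eps_gt0) // ret_layer_le1 // lookahead_start.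
by rewrite value_detour ?two_eps_le1 // => j; rewrite lookahead_start.
Qed.

Lemma outcome_lt (w : outcome) : (val w < width)%N.
Proof. exact: leq_trans (ltn_ord w) (eq_leq outcome_card). Qed.

(* Node 0, where the detour ends, is worth nothing, so the agent enters the
   layer at step 0. *)
Definition Vstar (h : nat) (x : state) : R :=
  if (h == ell) && (0 < val x < width)%N then 1 else 0.

Lemma mpc_star_start pi ws : is_mpc hard_mdp ell Vstar pi -> val (pi 0%N s1 ws) = 0%N.
Proof.
move=> [_ Hmax]; have [phi [Hphi <-]] := Hmax 0%N s1 ws H_gt0.
have [phi1 [p1 e1]] := stt_start_reach ws width_gt1.
apply: contraTeq (Hphi phi1) => det.
rewrite !mpc_obj_start p1 det /= /Vstar e1 stt_detour_end // eqxx width_gt1 /= add0r addr0.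
by rewrite -ltNge eps_lt1.
Qed.

Lemma mpc_obj_layer h x phi ws : (0 < h < ell)%N -> (val x < width)%N ->
  mpc_obj ell Vstar h x phi ws = (val (ws ell) == val (stt h x phi ws (ell - h)))%:R.
Proof.
move=> /andP[h0 hl] xN; have hL : (ell - h < lh H ell h)%N by rewrite /lh; lia.
rewrite /mpc_obj (bigD1 (Ordinal hL)) //= big1 => [|i ni]; last first.
  rewrite /rwd /= reward_mid //; first lia.
  by move: ni; rewrite -val_eqE /=; lia.
rewrite /Vterm /Vstar (_ : (h + lh H ell h == ell) = false); last lia.
rewrite if_same !addr0 !natrDE subnKC 1?ltnW // reward_end //.
by apply: stt_layer_stays => //; lia.
Qed.

(* From step [k >= 1] the lookahead shows the winning outcome of step [ell],
   and the maximiser keeps it reachable. *)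
Lemma mpc_star_layer pi ws k : is_mpc hard_mdp ell Vstar pi -> (0 < k <= ell)%N ->
  (val (traj pi s1 ws k) < width)%N /\
  exists phi, val (stt k (traj pi s1 ws k) phi ws (ell - k)) = val (ws ell).
Proof.
move=> Hpi; elim: k => [//|[|k] IH] /andP[_ kl].
  have -> : traj pi s1 ws 1 = node0.
    by apply: val_inj; rewrite /= val_next val_s1 mpc_star_start // next_state_start val_node0.
  rewrite val_node0 width_gt0; split => //.
  by apply: stt_layer_reach; rewrite subn1 ?outcome_lt.
have [|xN [phir Hr]] := IH; first by apply/andP; split; lia.
set x := traj pi s1 ws k.+1 in xN Hr *.
have hk : (0 < k.+1 < ell)%N by apply/andP; split; lia.
case: Hpi => _ Hmax; have [phi [Hphi Hpix]] := Hmax k.+1 x ws (ltn_trans kl ell_lt_H).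
have := Hphi phir; rewrite !mpc_obj_layer // Hr eqxx ler1n lt0b => /eqP E.
have tE : traj pi s1 ws k.+2 = stt k.+1 x phi ws 1 by rewrite [RHS]sttS ?natrDE addn0 Hpix.
split; first by rewrite tE; apply: stt_layer_stays => //; lia.
exists phi; rewrite tE -sttSr (_ : (ell - k.+2).+1 = ell - k.+1)%N ?E //; lia.
Qed.

Lemma ret_mpc_star pi ws : is_mpc hard_mdp ell Vstar pi -> ret pi s1 ws = 1.
Proof.
move=> Hpi; have [|xN [phi Hp]] := mpc_star_layer ws Hpi (k := ell).
  by apply/andP; split; lia.
rewrite subnn in Hp.
by rewrite ret_split reward_start_layer ?mpc_star_start // add0r reward_end // -Hp eqxx.
Qed.

Lemma value_mpc_star pi : is_mpc hard_mdp ell Vstar pi -> value hard_mdp pi s1 = 1.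
Proof.
move=> Hpi; rewrite value_uniform -sum_eps mulr_sumr; apply: eq_bigr => j _.
by rewrite ret_mpc_star ?mulr1.
Qed.

Lemma nstates_le : (nstates <= A ^ ell + ell + 1)%N.
Proof.
have : (A ^ ell = A * width)%N by rewrite /width -expnS prednK; lia.
have : (2 * width <= A * width)%N by rewrite leq_mul2r A_ge2 orbT.
by have := width_gt1; rewrite /nstates; lia.
Qed.

Lemma two_eps_le_pow : eps + eps <= A%:R `^ (1 - ell%:R / 2).
Proof.
have A2 : (2 : R) <= A%:R by rewrite (ler_nat R 2 A).
have A0 : (0 : R) <= A%:R by rewrite ler0n.
have W : (width%:R : R) = A%:R `^ (ell.-1)%:R by rewrite powR_mulrn // natrX.
rewrite two_eps ler_pdivrMr ?width_gt0R // W -powRD; last by rewrite pnatr_eq0; lia.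
have -> : 1 - ell%:R / 2 + (ell.-1)%:R = ell%:R / 2 :> R.
  have E : (ell%:R : R) = (ell.-1)%:R + 1 by rewrite natr1 prednK // ltnW.
  by rewrite E; field.
apply: le_trans A2 _; rewrite -[leLHS](powRr1 A0); apply: ler_powR; first by rewrite ler1n; lia.
by rewrite ler_pdivlMr // mul1r (ler_nat R 2 ell).
Qed.

End HardInstance.

Unset Implicit Arguments.

Theorem claim2 (R : realType) (A H ell : nat)
  (Vp : forall n, mdp R A H n -> nat -> 'I_n -> R)
  (pip : forall n (M : mdp R A H n), nat -> 'I_n -> (nat -> outc M) -> 'I_A) :
  (2 <= ell)%N -> (2 <= A)%N -> (ell.+1 <= H)%N ->
  (forall h, (h < H)%N ->
     exists f : ('rV[R]_A -> R) -> R, (forall mu, 0 <= f mu) /\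
       forall n (M : mdp R A H n) (s : 'I_n),
         semi_terminal M h s -> Vp n M h s = f (rlaw M h s)) ->
  (forall n (M : mdp R A H n), is_mpc M ell (Vp n M) (pip n M)) ->
  exists n (M : mdp R A H n) (s1 : 'I_n),
    (n <= A ^ ell + ell + 1)%N /\ det_trans M /\
    exists pistar, is_lookahead M ell pistar /\
      (forall pi, is_lookahead M ell pi -> value M pi s1 <= value M pistar s1) /\
      0 < value M pistar s1 /\
      value M (pip n M) s1 / value M pistar s1 <= (A%:R) `^ (1 - ell%:R / 2) /\
      exists V pi', is_mpc M ell V pi' /\ value M pi' s1 = value M pistar s1.
Proof.
move=> ell_ge2 A_ge2 ell_lt_H Vp_law pip_mpc.
pose M := hard_mdp R ell_ge2 A_ge2 ell_lt_H.
pose pistar := mpc_agent (M := M) ell (a0 ell_ge2 A_ge2 ell_lt_H) (@Vstar R A ell).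
have pistar_mpc : is_mpc M ell (@Vstar R A ell) pistar by apply: is_mpc_agent.
have pistar_value := value_mpc_star pistar_mpc.
exists (nstates A ell), M, (s1 A ell); split; first exact: nstates_le.
split=> //; exists pistar; rewrite pistar_value.
split; first exact: pistar_mpc.1.
split; first exact: value_lookahead_le1.
split; first exact: ltr01.
split; last by exists (@Vstar R A ell), pistar.
rewrite divr1 value_detour => [|j]; first exact: two_eps_le_pow.
apply: (mpc_detours (pip_mpc _ M)) => x y xN yN.
have [f [_ Vp_f]] := Vp_law ell ell_lt_H.
by rewrite !Vp_f ?(rlaw_layer_eq _ _ _ _ xN yN) //; apply: semi_terminal_layer.
Qed.
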